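(* Let $f\in L^1(\mathbb{R})$ satisfy $\int_\mathbb{R}|y|^\epsilon|f(y)|\,\mathrm{d}y<\infty$ for some $\epsilon>0$, and for $k\in\mathbb{N}$ set $g_k(x):=(1+|x|^\epsilon)|f_k(x)|$. If for some $\overline{k}\in\mathbb{N}$ $$\sum_{m\in\mathbb{Z}}\sup_{z\in[m,m+1)}g_{\overline{k}}(z)<\infty,$$ then $\sum_{m\in\mathbb{Z}}\sup_{z\in[m,m+1)}g_k(z)<\infty$ for every $k\ge\overline{k}$.
   Context: $f_1:=f$, $f_{k+1}:=f_k*f$, i.e. $f_{k+1}(x)=\int_\mathbb{R} f_k(x-y)f(y)\,\mathrm{d}y$. *)

From HB Require Import structures.
From mathcomp Require Import all_boot all_order all_algebra.
From mathcomp Require Import all_classical all_reals all_analysis.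
Set Implicit Arguments. Unset Strict Implicit. Unset Printing Implicit Defensive.
Import Order.TTheory GRing.Theory Num.Theory.
Import numFieldNormedType.Exports.
Local Open Scope classical_set_scope.
Local Open Scope ring_scope.

Definition conv (R : realType) (h f : R -> R) : R -> R :=
  fun x => Rintegral (@lebesgue_measure R) setT (fun y => h (x - y) * f y).

(* convpow_aux f n = f_{n+1} *)
Fixpoint convpow_aux (R : realType) (f : R -> R) (n : nat) : R -> R :=
  match n with
  | 0 => f
  | n.+1 => conv (convpow_aux f n) f
  end.

Definition fpow (R : realType) (f : R -> R) (k : nat) : R -> R :=
  convpow_aux f k.-1.

Definition gk (R : realType) (f : R -> R) (eps : R) (k : nat) : R -> R :=
  fun x => (1 + `|x| `^ eps) * `|fpow f k x|.

Definition amalgam_sum (R : realType) (g : R -> R) : \bar R :=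
  \esum_(m in [set: int])
     ereal_sup [set (g z)%:E | z in `[(m%:~R : R), m%:~R + 1[ ].

(* For x in the cell [m, m+1), the bound
   1 + |x|^eps <= 2^eps (1 + |x - y|^eps) (1 + |y|^eps) gives
   g_{k+1}(x) <= 2^eps \int g_k(x - y) g_1(y) dy, and x - y lies in one of the two
   cells starting at floor (m - y).  So the supremum a_{k+1}(m) of g_{k+1} on the
   m-th cell is at most
   2^eps \int (a_k(floor (m - y)) + a_k(floor (m - y) + 1)) g_1(y) dy.
   Summing over m, each of the two sums is a shift of sum_m a_k(m), hence
   sum_m a_{k+1}(m) <= 2^(eps + 1) (sum_m a_k(m)) \int g_1, and g_1 is integrable
   by the moment assumption.  Induction on k concludes. *)

From Pilot Require Import Defs.
From HB Require Import structures.
From mathcomp Require Import all_boot all_order all_algebra.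
From mathcomp Require Import all_classical all_reals all_analysis.
From mathcomp Require Import lra measurable_realfun zify.
Import Order.TTheory GRing.Theory Num.Theory.
Import numFieldNormedType.Exports.
Local Open Scope classical_set_scope.
Local Open Scope ring_scope.

Lemma powR_normD_le {R : realType} (eps x y : R) : 0 <= eps ->
  `|x + y| `^ eps <= 2 `^ eps * (`|x| `^ eps + `|y| `^ eps).
Proof.
move=> eps_ge0; wlog xy : x y / `|x| <= `|y|.
  move=> wlog_xy; have [|/ltW] := leP `|x| `|y|; first exact: wlog_xy.
  by move=> /wlog_xy; rewrite addrC [_ + `|x| `^ _]addrC.
have xy_le : `|x + y| <= 2 * `|y| by apply: le_trans (ler_normD _ _) _; lra.
apply: le_trans (_ : (2 * `|y|) `^ eps <= _).
  by apply: ge0_ler_powR; rewrite ?nnegrE ?mulr_ge0.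
by rewrite powRM// ler_wpM2l ?powR_ge0// lerDr powR_ge0.
Qed.

Lemma powR_weight_le {R : realType} (eps x y : R) : 0 <= eps ->
  1 + `|x| `^ eps <= 2 `^ eps * ((1 + `|x - y| `^ eps) * (1 + `|y| `^ eps)).
Proof.
move=> eps_ge0; have := powR_normD_le eps (x - y) y eps_ge0; rewrite subrK.
have one_le2 : 1 <= 2 `^ eps by rewrite -[leLHS](powRr0 2) ler_powR ?ler1n.
have := powR_ge0 `|x - y| eps; have := powR_ge0 `|y| eps.
move: (`|x - y| `^ eps) (`|y| `^ eps) (2 `^ eps) one_le2 => u v c c1 v0 u0 ?.
have : 0 <= c * (u * v) by rewrite !mulr_ge0//; lra.
nra.
Qed.

Lemma ge0_le_integralT {d} {T : measurableType d} {R : realType}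
  (mu : {measure set T -> \bar R}) (f g : T -> \bar R) :
  (forall x, 0 <= f x)%E -> (forall x, f x <= g x)%E ->
  (\int[mu]_x f x <= \int[mu]_x g x)%E.
Proof.
move=> f0 fg; have g0 x : (0 <= g x)%E := le_trans (f0 x) (fg x).
rewrite !ge0_integralTE//; apply: ereal_sup_le => _ [h hf <-].
by exists h => // x; exact: le_trans (hf x) (fg x).
Qed.

Lemma EFin_normr_RintegralT_le {d} {T : measurableType d} {R : realType}
  (mu : {measure set T -> \bar R}) (h : T -> R) :
  ((`|Rintegral mu setT h|)%:E <= \int[mu]_x (`|h x|)%:E)%E.
Proof.
rewrite /Rintegral integralE; set c := (\int[mu]_x (`|h x|)%:E)%E.
have pos_le : (\int[mu]_x ((EFin \o h)^\+ x) <= c)%E.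
  apply: ge0_le_integralT => x; first exact: funepos_ge0.
  by rewrite funeposE /= -EFin_max lee_fin ge_max normr_ge0 ler_norm.
have neg_le : (\int[mu]_x ((EFin \o h)^\- x) <= c)%E.
  apply: ge0_le_integralT => x; first exact: funeneg_ge0.
  by rewrite funenegE /= -EFin_max lee_fin ge_max normr_ge0 -normrN ler_norm.
have pos_ge0 : (0 <= \int[mu]_x ((EFin \o h)^\+ x))%E.
  by apply: integral_ge0 => x _; exact: funepos_ge0.
have neg_ge0 : (0 <= \int[mu]_x ((EFin \o h)^\- x))%E.
  by apply: integral_ge0 => x _; exact: funeneg_ge0.
move: pos_le neg_le pos_ge0 neg_ge0.
case: (\int[mu]_x _)%E => [a| |]; case: (\int[mu]_x _)%E => [b| |] //=;
  case: c => [r| |] //=; rewrite ?lee_fin ?normr0 ?leey// => ar br a0 b0.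
by rewrite ler_norml; apply/andP; split; lra.
Qed.

(* No integrability of [h] is assumed, unlike [le_normr_Rintegral]: the
   iterated convolutions are not known to be measurable. *)
Lemma mulr_normr_RintegralT_le {d} {T : measurableType d} {R : realType}
  (mu : {measure set T -> \bar R}) (h p : T -> R) (c : R) :
  0 < c -> measurable_fun [set: T] p -> (forall x, 0 <= p x) ->
  (forall x, c * `|h x| <= p x) ->
  ((c * `|Rintegral mu setT h|)%:E <= \int[mu]_x (p x)%:E)%E.
Proof.
move=> c_gt0 mp p0 hp.
have scale : (\int[mu]_x (c^-1 * p x)%:E = (c^-1)%:E * \int[mu]_x (p x)%:E)%E.
  under eq_integral do rewrite EFinM.
  apply: ge0_integralZl_EFin => //; last by rewrite invr_ge0 ltW.
  - by move=> x _; rewrite lee_fin.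
  - exact/measurable_EFinP.
have bound : ((`|Rintegral mu setT h|)%:E <= \int[mu]_x (c^-1 * p x)%:E)%E.
  apply: le_trans (EFin_normr_RintegralT_le mu h) _.
  apply: ge0_le_integralT => x; rewrite lee_fin// -(ler_pM2l c_gt0).
  by rewrite mulrA mulfV ?gt_eqF// mul1r.
rewrite EFinM; apply: le_trans (lee_wpmul2l _ bound) _; first by rewrite lee_fin ltW.
by rewrite scale muleA -EFinM mulfV ?gt_eqF// mul1e.
Qed.

Lemma measurable_fun_floor_comp {R : realType} {d} {T : measurableType d}
  (beta : int -> T) (c : R) :
  measurable_fun [set: R] (fun y => beta (Num.floor (c - y))).
Proof.
move=> _ B mB; rewrite setTI.
have -> : (fun y => beta (Num.floor (c - y))) @^-1` B =
    \bigcup_(j in [set j | B (beta j)]) `]c - (j + 1)%:~R, c - j%:~R]%classic.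
  apply/seteqP; split => y /=.
    move=> By; exists (Num.floor (c - y)) => //=.
    have := floor_le (c - y); have := floorD1_gt (c - y); rewrite intrD.
    by rewrite in_itv /=; move=> ? ?; apply/andP; split; lra.
  move=> [j Bj]; rewrite /= in_itv /= => /andP[jy yj].
  suff -> : Num.floor (c - y) = j by [].
  by apply/eqP; rewrite floor_eq; apply/andP; split; lra.
rewrite bigcup_mkcond; apply: countable_bigcupT_measurable => // j.
by case: ifP => _; [exact: measurable_itv | exact: measurable0].
Qed.

Lemma floor_subr_window {R : realType} (m : int) (x y : R) :
  m%:~R <= x < m%:~R + 1 ->
  Num.floor (x - y) = Num.floor (m%:~R - y) \/
  Num.floor (x - y) = Num.floor (m%:~R - y) + 1.
Proof.
move=> /andP[mx xm]; set t := Num.floor (m%:~R - y).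
have t_le : t <= Num.floor (x - y) by apply: le_floor; lra.
have lt_t2 : Num.floor (x - y) < t + 1 + 1.
  rewrite floor_lt_int; have := floorD1_gt (m%:~R - y).
  rewrite -/t !intrD; lra.
lia.
Qed.

Definition cell_sup {R : realType} (g : R -> R) (j : int) : \bar R :=
  ereal_sup [set (g z)%:E | z in `[(j%:~R : R), j%:~R + 1[ ].

Section CellSup.
Context {R : realType}.
Variable g : R -> R.

Lemma amalgam_sumE : amalgam_sum g = (\esum_(j in [set: int]) cell_sup g j)%E.
Proof. by []. Qed.

Lemma cell_sup_floor_ge (u : R) : ((g u)%:E <= cell_sup g (Num.floor u))%E.
Proof.
apply: ereal_sup_ubound; exists u => //=.
by rewrite in_itv /= floor_le /= -[1]/(1%:~R) -intrD floorD1_gt.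
Qed.

Lemma cell_sup_le_amalgam (j : int) : (cell_sup g j <= amalgam_sum g)%E.
Proof.
apply: esum_ge; exists [set j]; first by split => //; exact: finite_set1.
by rewrite fsbig_set1.
Qed.

Lemma amalgam_sum_shift (t : int) :
  amalgam_sum g = (\esum_(j in [set: int]) cell_sup g (j + t))%E.
Proof.
rewrite amalgam_sumE -(esum_image _ (+%R^~ t)); last by move=> x y _ _ /addIr.
by congr esum; apply/seteqP; split => // j _; exists (j - t) => //; exact: subrK.
Qed.

Hypotheses (g_ge0 : forall x, 0 <= g x) (g_amalgam : (amalgam_sum g < +oo)%E).

Lemma cell_sup_ge0 (j : int) : (0 <= cell_sup g j)%E.
Proof.
by have := cell_sup_floor_ge j%:~R; rewrite intrKfloor; apply: le_trans; rewrite lee_fin.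
Qed.

Lemma amalgam_sum_ge0 : (0 <= amalgam_sum g)%E.
Proof. by apply: esum_ge0 => j _; exact: cell_sup_ge0. Qed.

Definition cell_supr (j : int) : R := fine (cell_sup g j).

Lemma cell_suprE (j : int) : cell_sup g j = (cell_supr j)%:E.
Proof.
rewrite /cell_supr fineK// ge0_fin_numE ?cell_sup_ge0//.
exact: le_lt_trans (cell_sup_le_amalgam j) g_amalgam.
Qed.

Lemma cell_supr_floor_ge (u : R) : g u <= cell_supr (Num.floor u).
Proof. by rewrite -lee_fin -cell_suprE; exact: cell_sup_floor_ge. Qed.

Lemma cell_supr_ge0 (j : int) : 0 <= cell_supr j.
Proof. by rewrite -lee_fin -cell_suprE cell_sup_ge0. Qed.

Lemma fsum_cell_supr_shift_le (F : set int) (t : int) : finite_set F ->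
  \sum_(j \in F) cell_supr (j + t) <= fine (amalgam_sum g).
Proof.
move=> finF; have amalgam_ge0 := amalgam_sum_ge0.
rewrite -lee_fin -fsumEFin// fineK ?ge0_fin_numE// (amalgam_sum_shift t).
apply: esum_ge; exists F => //.
by rewrite (eq_fsbigr (fun j => cell_sup g (j + t)))// => j _; rewrite cell_suprE.
Qed.

Lemma cell_supr_window_ge (m : int) (x y : R) : m%:~R <= x < m%:~R + 1 ->
  g (x - y) <= cell_supr (Num.floor (m%:~R - y)) +
               cell_supr (Num.floor (m%:~R - y) + 1).
Proof.
move=> /(@floor_subr_window _ m x y) [<-|<-]; apply: le_trans (cell_supr_floor_ge _) _.
  by rewrite lerDl cell_supr_ge0.
by rewrite lerDr cell_supr_ge0.
Qed.

End CellSup.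

Section ConvolutionStep.
Context {R : realType}.
Variables (f : R -> R) (eps : R).
Hypotheses (eps_ge0 : 0 <= eps) (mf : measurable_fun [set: R] f).

Lemma gk_ge0 (k : nat) (x : R) : 0 <= gk f eps k x.
Proof. by rewrite mulr_ge0// addr_ge0// powR_ge0. Qed.

Lemma fpowS (k : nat) : (1 <= k)%N -> fpow f k.+1 = Defs.conv (fpow f k) f.
Proof. by case: k. Qed.

Lemma measurable_gk1 : measurable_fun [set: R] (gk f eps 1).
Proof.
apply: measurable_funM; last exact: measurableT_comp.
by apply: measurable_funD => //; exact: measurableT_comp (measurable_powR _) _.
Qed.

Lemma gk_mul_le (k : nat) (x y : R) :
  (1 + `|x| `^ eps) * `|fpow f k (x - y) * f y| <=
  2 `^ eps * (gk f eps k (x - y) * gk f eps 1 y).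
Proof.
rewrite /gk /= normrM.
have := powR_weight_le eps x y eps_ge0.
have := normr_ge0 (fpow f k (x - y)); have := normr_ge0 (f y).
move: (`|fpow f k (x - y)|) (`|f y|) => P Q P0 Q0 weight_le.
have := ler_wpM2r (mulr_ge0 Q0 P0) weight_le; nra.
Qed.

Variable k : nat.
Hypotheses (k_ge1 : (1 <= k)%N) (gk_amalgam : (amalgam_sum (gk f eps k) < +oo)%E).

Let a := cell_supr (gk f eps k).

Definition cell_kernel (m : int) (y : R) : R :=
  2 `^ eps * ((a (Num.floor (m%:~R - y)) + a (Num.floor (m%:~R - y) + 1)) *
    gk f eps 1 y).

Lemma cell_kernel_ge0 (m : int) (y : R) : 0 <= cell_kernel m y.
Proof.
by rewrite mulr_ge0 ?powR_ge0// mulr_ge0 ?gk_ge0// addr_ge0//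
  cell_supr_ge0// => z; exact: gk_ge0.
Qed.

Lemma measurable_cell_kernel (m : int) : measurable_fun [set: R] (cell_kernel m).
Proof.
apply: measurable_funM => //; apply: measurable_funM; last exact: measurable_gk1.
apply: measurable_funD; first exact: measurable_fun_floor_comp.
exact: (measurable_fun_floor_comp (fun j => a (j + 1))).
Qed.

Lemma gkS_le_integral_cell_kernel (m : int) (x : R) : m%:~R <= x < m%:~R + 1 ->
  ((gk f eps k.+1 x)%:E <= \int[lebesgue_measure]_y (cell_kernel m y)%:E)%E.
Proof.
move=> x_in; rewrite /gk fpowS//.
apply: mulr_normr_RintegralT_le.
- by rewrite ltr_pwDl// powR_ge0.
- exact: measurable_cell_kernel.
- exact: cell_kernel_ge0.
move=> y; apply: le_trans (gk_mul_le k x y) _.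
rewrite ler_wpM2l ?powR_ge0// ler_wpM2r ?gk_ge0//.
by apply: cell_supr_window_ge x_in => // z; exact: gk_ge0.
Qed.

Lemma cell_sup_gkS_le (m : int) :
  (cell_sup (gk f eps k.+1) m <=
   \int[lebesgue_measure]_y (cell_kernel m y)%:E)%E.
Proof.
apply: ge_ereal_sup => _ [x /= x_in <-].
by apply: gkS_le_integral_cell_kernel; rewrite in_itv /= in x_in.
Qed.

Let A := fine (amalgam_sum (gk f eps k)).

Let A_ge0 : 0 <= A.
Proof. exact/fine_ge0/amalgam_sum_ge0/gk_ge0. Qed.

Lemma fsum_cell_kernel_le (F : set int) (y : R) : finite_set F ->
  \sum_(m \in F) cell_kernel m y <= 2 `^ eps * (2 * A) * gk f eps 1 y.
Proof.
move=> finF; rewrite /cell_kernel -mulr_fsumr -mulrA ler_wpM2l ?powR_ge0//.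
rewrite -mulr_fsuml ler_wpM2r ?gk_ge0//; set t := Num.floor (- y).
have floor_shift (m : int) : Num.floor (m%:~R - y) = m + t.
  by rewrite floorDzr ?intr_int// intrKfloor.
rewrite (eq_fsbigr (fun m => a (m + t) + a (m + (t + 1)))) ?fsbig_split//;
  last by move=> m _; rewrite floor_shift addrA.
have shift_le (s : int) : \sum_(m \in F) a (m + s) <= A.
  exact: fsum_cell_supr_shift_le (gk_ge0 k) gk_amalgam _ _ finF.
by apply: le_trans (lerD (shift_le t) (shift_le (t + 1))) _; lra.
Qed.

Hypothesis weight_int :
  (\int[lebesgue_measure]_y (gk f eps 1 y)%:E < +oo)%E.

Lemma amalgam_gkS_le : (amalgam_sum (gk f eps k.+1) <=
  (2 `^ eps * (2 * A))%:E * \int[lebesgue_measure]_y (gk f eps 1 y)%:E)%E.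
Proof.
rewrite amalgam_sumE; apply: ge_ereal_sup => _ [F [finF _] <-].
apply: le_trans (lee_fsum finF (fun m _ => cell_sup_gkS_le m)) _.
rewrite -ge0_integral_fsum//; last 2 first.
- by move=> m; apply/measurable_EFinP; exact: measurable_cell_kernel.
- by move=> m y _; rewrite lee_fin cell_kernel_ge0.
rewrite -ge0_integralZl_EFin//; last 3 first.
- by move=> y _; rewrite lee_fin gk_ge0.
- by apply/measurable_EFinP; exact: measurable_gk1.
- by rewrite mulr_ge0 ?powR_ge0// mulr_ge0.
apply: ge0_le_integralT => y.
  by apply: fsume_ge0 => m _; rewrite lee_fin cell_kernel_ge0.
by rewrite fsumEFin// -EFinM lee_fin fsum_cell_kernel_le.
Qed.

Lemma amalgam_gkS_lty : (amalgam_sum (gk f eps k.+1) < +oo)%E.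
Proof.
apply: le_lt_trans amalgam_gkS_le _; apply: lte_mul_pinfty => //.
by rewrite lee_fin mulr_ge0 ?powR_ge0// mulr_ge0.
Qed.

End ConvolutionStep.

Lemma integral_gk1_lty {R : realType} (f : R -> R) (eps : R) :
  (@lebesgue_measure R).-integrable [set: R] (EFin \o f) ->
  (\int[@lebesgue_measure R]_y (`|y| `^ eps * `|f y|)%:E < +oo)%E ->
  (\int[@lebesgue_measure R]_y (gk f eps 1 y)%:E < +oo)%E.
Proof.
move=> f_int moment_lty; have mf : measurable_fun [set: R] f.
  by apply/measurable_EFinP; exact: measurable_int f_int.
rewrite (_ : (fun y => _) = (fun y => (`|f y|)%:E + (`|y| `^ eps * `|f y|)%:E)%E);
  last by apply/funext => y; rewrite /gk /= -EFinD mulrDl mul1r.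
rewrite ge0_integralD//; last 2 first.
- by apply/measurable_EFinP; exact: measurableT_comp.
- apply/measurable_EFinP; apply: measurable_funM; last exact: measurableT_comp.
  exact: measurableT_comp (measurable_powR _) _.
by apply: lte_add_pinfty => //; case/integrableP: f_int.
Qed.

Theorem mainTheorem14 (R : realType) (f : R -> R) (eps : R) (kbar : nat) :
  (@lebesgue_measure R).-integrable [set: R] (EFin \o f) ->
  0 < eps ->
  (\int[@lebesgue_measure R]_y (`|y| `^ eps * `|f y|)%:E < +oo)%E ->
  (1 <= kbar)%N ->
  (amalgam_sum (gk f eps kbar) < +oo)%E ->
  forall k : nat, (kbar <= k)%N -> (amalgam_sum (gk f eps k) < +oo)%E.
Proof.
move=> f_int eps_gt0 moment_lty kbar_ge1 kbar_amalgam k kbar_le_k.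
have mf : measurable_fun [set: R] f.
  by apply/measurable_EFinP; exact: measurable_int f_int.
have weight_int := integral_gk1_lty _ _ f_int moment_lty.
rewrite -(subnK kbar_le_k); elim: (k - kbar)%N => [//|n IH].
rewrite addSn; apply: amalgam_gkS_lty (ltW eps_gt0) mf _ _ IH weight_int.
exact: leq_trans kbar_ge1 (leq_addl _ _).
Qed.
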